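(* For each positive integer $n\ge 4$, there exists a family of $n$ digraphs of order $4^n$, each strongly connected and non symmetric, which are pairwise real strongly quasi-cospectral.
   Context: A sidigraph is a digraph (no loops, at most one arc from $u$ to $v$) with a sign $\pm1$ on each arc; its adjacency matrix has entry $\sigma(v_i,v_j)$ if there is an arc from $v_i$ to $v_j$ and $0$ otherwise, and its spectrum is the multiset of eigenvalues of this matrix. An (unsigned) digraph is identified with the sidigraph having all arcs positive. A sidigraph on a digraph $D$ is a sidigraph whose underlying digraph is $D$. Two (si)digraphs are cospectral if they have the same spectrum. The sign of a cycle is the product of its arc signs; a sidigraph is cycle balanced if every directed cycle is positive. A digraph is symmetric if whenever $(u,v)$ is an arc so is $(v,u)$; it is strongly connected in the usual sense. Two digraphs $D_1,D_2$ are real strongly quasi-cospectral if $D_1$ and $D_2$ are cospectral with all eigenvalues real, and there exist non cycle balanced sidigraphs $S_1$ on $D_1$ and $S_2$ on $D_2$ that are cospectral with all eigenvalues real. *)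

From HB Require Import structures.
From mathcomp Require Import all_boot all_order all_algebra all_fingroup all_field.
Set Implicit Arguments. Unset Strict Implicit. Unset Printing Implicit Defensive.
Import Order.TTheory GRing.Theory Num.Theory.
Local Open Scope ring_scope.

(* A digraph on the vertex set 'I_N is an arc relation D (arc u -> v iff D u v);
   at most one arc from u to v is automatic; we require no loops. *)
Definition digraph (N : nat) (D : rel 'I_N) : Prop := forall v, ~~ D v v.

(* A sidigraph on D is given by a sign assignment: sg u v = true means the
   arc (u,v) is negative (sign -1), false means positive (sign +1).
   Values of sg on non-arcs are irrelevant. *)
Definition sign_of (b : bool) : algC := (-1) ^+ b.

Definition sadj (N : nat) (D : rel 'I_N) (sg : 'I_N -> 'I_N -> bool) : 'M[algC]_N :=
  \matrix_(i, j) (if D i j then sign_of (sg i j) else 0).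

Definition adj (N : nat) (D : rel 'I_N) : 'M[algC]_N := sadj D (fun _ _ => false).

Definition is_spectrum (N : nat) (A : 'M[algC]_N) (s : seq algC) : Prop :=
  char_poly A = \prod_(a <- s) ('X - a%:P).

Definition real_cospectral (N : nat) (A B : 'M[algC]_N) : Prop :=
  exists s : seq algC, [/\ is_spectrum A s, is_spectrum B s & all (fun a => a \is Num.real) s].

Definition dcycle (N : nat) (D : rel 'I_N) (c : seq 'I_N) : Prop :=
  [/\ c != [::], uniq c & path.cycle D c].

Definition cycle_sign (N : nat) (sg : 'I_N -> 'I_N -> bool) (c : seq 'I_N) : algC :=
  \prod_(x <- c) sign_of (sg x (next c x)).

Definition cycle_balanced (N : nat) (D : rel 'I_N) (sg : 'I_N -> 'I_N -> bool) : Prop :=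
  forall c, dcycle D c -> cycle_sign sg c = 1.

Definition symmetric_digraph (N : nat) (D : rel 'I_N) : Prop :=
  forall u v, D u v -> D v u.

Definition strongly_connected (N : nat) (D : rel 'I_N) : Prop :=
  forall u v, connect D u v.

Definition isomorphic (N : nat) (D1 D2 : rel 'I_N) : Prop :=
  exists f : {perm 'I_N}, forall u v, D1 u v = D2 (f u) (f v).

Definition real_sqc (N : nat) (D1 D2 : rel 'I_N) : Prop :=
  real_cospectral (adj D1) (adj D2) /\
  exists sg1 sg2 : 'I_N -> 'I_N -> bool,
    [/\ ~ cycle_balanced D1 sg1, ~ cycle_balanced D2 sg2
      & real_cospectral (sadj D1 sg1) (sadj D2 sg2)].

From HB Require Import structures.
From mathcomp Require Import all_boot all_order all_algebra all_fingroup all_field.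
From mathcomp Require Import ring zify.
Set Implicit Arguments. Unset Strict Implicit. Unset Printing Implicit Defensive.
Import Order.TTheory GRing.Theory Num.Theory.
Local Open Scope ring_scope.

(* Each digraph of the family is a blow-up of a 3-vertex pattern: the vertices
   are split into five consecutive segments, the out-neighbourhood of a vertex
   depends only on its class (segment 0, segments 1-2, or segments 3-4), and is
   a union of segments.  Hence the (signed) adjacency matrix factors as X Y with
   X the N x 3 class-indicator matrix, and by the Sylvester identity
   X^3 chi(XY) = X^N chi(YX).  The 3 x 3 matrix YX is star-shaped, with
   characteristic polynomial X^3 - c X, where c = N - 2 without signs and c = 0
   for the chosen signing; so all unsigned digraphs have spectrum
   {+-sqrt(N-2), 0^(N-2)} and all signed ones {0^N}.  The 2-cycle through vertex
   1 and the last vertex is negative, and the out-degree k + 2 of vertex 0,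
   where k + 2 is the length of segment 2, separates the members of the family. *)

Lemma char_poly_mulmxC (R : comNzRingType) (m n : nat)
    (A : 'M[R]_(m, n)) (B : 'M[R]_(n, m)) :
  'X^m * char_poly (B *m A) = 'X^n * char_poly (A *m B).
Proof.
pose Ap := map_mx polyC A; pose Bp := map_mx polyC B.
pose M : 'M[{poly R}]_(n + m) := block_mx 'X%:M Bp Ap 1%:M.
have detM : \det M = char_poly (B *m A).
  have elimA : M *m block_mx 1%:M 0 (- Ap) 1%:M = block_mx ('X%:M - Bp *m Ap) Bp 0 1%:M.
    by rewrite mulmx_block !mulmx1 !mulmx0 !mul1mx mulmxN !add0r subrr.
  have := congr1 determinant elimA.
  rewrite det_mulmx det_lblock !det1 mulr1 det_ublock det1 !mulr1 => ->.
  by rewrite /char_poly /char_poly_mx map_mxM.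
have elimB : block_mx 1%:M 0 (- Ap) 'X%:M *m M = block_mx 'X%:M Bp 0 ('X%:M - Ap *m Bp).
  rewrite mulmx_block !mul1mx !mul0mx !addr0 mulNmx mul_mx_scalar mul_scalar_mx.
  by rewrite addNr mulmx1 mulNmx addrC.
have := congr1 determinant elimB.
rewrite det_mulmx det_lblock det1 mul1r det_ublock !det_scalar detM.
by rewrite /char_poly /char_poly_mx map_mxM => ->; rewrite map_mxM.
Qed.

Definition star_mx (R : nzRingType) (p q r t : R) : 'M[R]_3 :=
  \matrix_(i, j) match nat_of_ord i, nat_of_ord j with
                 | 0, 1 => p | 0, 2 => q | 1, 0 => r | 2, 0 => t | _, _ => 0%R
                 end.

Lemma char_poly_star_mx (R : comNzRingType) (p q r t : R) :
  char_poly (star_mx p q r t) = 'X^3 - (p * r + q * t)%:P * 'X.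
Proof.
rewrite /char_poly (expand_det_row _ ord0) !big_ord_recl big_ord0 /cofactor.
rewrite !(expand_det_row _ ord0) !big_ord_recl !big_ord0 /cofactor ?det_mx00.
rewrite !det_mx11 !mxE /= /bump /= rmorphD !rmorphM /=.
rewrite !(mulr1n, mulr0n, subr0, sub0r, expr0, expr1, mul1r, mulr1, mulr0, mul0r,
          addr0, add0r, add0n, addn0) /=.
ring.
Qed.

Lemma char_poly_rank3 (R : idomainType) (N : nat) (X : 'M[R]_(N, 3))
    (Y : 'M[R]_(3, N)) (c : R) :
  (2 <= N)%N -> char_poly (Y *m X) = 'X^3 - c%:P * 'X ->
  char_poly (X *m Y) = 'X^(N - 2) * ('X^2 - c%:P).
Proof.
move=> N_ge2 chiYX; apply: (@mulfI _ 'X^3); first by rewrite expf_neq0 ?polyX_eq0.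
rewrite -char_poly_mulmxC chiYX.
have -> : N = (N - 2 + 2)%N by lia.
rewrite addnK exprD; ring.
Qed.

Lemma prod_XsubC_nseq0 (R : nzRingType) (m : nat) :
  \prod_(a <- nseq m (0 : R)) ('X - a%:P) = 'X^m.
Proof.
elim: m => [|m IHm]; first by rewrite big_nil expr0.
by rewrite big_cons IHm subr0 exprS.
Qed.

Lemma all_real_nseq0 (m : nat) : all (fun a : algC => a \is Num.real) (nseq m 0).
Proof. by rewrite all_nseq real0 orbT. Qed.

Definition segment (k T v : nat) : nat :=
  (if v == 0 then 0 else if v == 1 then 1 else if v < k + 4 then 2
   else if v < T then 3 else 4)%N.

Lemma sum_segment (V : nmodType) (N k T : nat) (G : nat -> V) :
  (k + 4 <= T)%N -> (T <= N)%N ->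
  \sum_(j < N) G (segment k T j) =
  G 0%N + G 1%N + G 2%N *+ (k + 2) + G 3%N *+ (T - (k + 4)) + G 4%N *+ (N - T).
Proof.
move=> kT TN.
rewrite -(big_mkord xpredT (fun i => G (segment k T i))).
rewrite (big_cat_nat _ (n := T)) //=; try lia.
rewrite (big_cat_nat _ (n := (k + 4)%N)) //=; try lia.
rewrite (big_cat_nat _ (n := 2%N)) //=; try lia.
rewrite (big_cat_nat _ (n := 1%N)) //= !big_nat1.
have const_on b m1 m2 : (forall i, (m1 <= i < m2)%N -> segment k T i = b) ->
    \sum_(m1 <= i < m2) G (segment k T i) = G b *+ (m2 - m1).
  move=> seg_b; rewrite (eq_big_nat _ _ (F2 := fun=> G b)) ?sumr_const_nat //.
  by move=> i /seg_b ->.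
rewrite (const_on 2%N) 1?(const_on 3%N) 1?(const_on 4%N); first by rewrite -addnBA // subnn.
all: by move=> i /andP[lo hi]; rewrite /segment; repeat case: ifP; lia.
Qed.

Definition seg_class (s : nat) : nat := (if s == 0 then 1 else if s <= 2 then 0 else 2)%N.

Definition class_arc (c s : nat) : bool :=
  (if c == 0 then (s == 0) || (2 < s) else if c == 1 then s == 2 else s == 1)%N.

Definition class_neg (c s : nat) : bool :=
  (if c == 0 then s == 3 else if c == 1 then false else true)%N.

Definition sqc_digraph (N k T : nat) : rel 'I_N :=
  fun u v => class_arc (seg_class (segment k T u)) (segment k T v).

Definition sqc_sign (N k T : nat) : 'I_N -> 'I_N -> bool :=
  fun u v => class_neg (seg_class (segment k T u)) (segment k T v).

Definition class_mx (N k T : nat) : 'M[algC]_(N, 3) :=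
  \matrix_(i, c) (seg_class (segment k T i) == c)%:R.

Definition arc_entry (neg : nat -> nat -> bool) (c s : nat) : algC :=
  if class_arc c s then sign_of (neg c s) else 0.

Definition arc_mx (N k T : nat) (neg : nat -> nat -> bool) : 'M[algC]_(3, N) :=
  \matrix_(c, j) arc_entry neg c (segment k T j).

Arguments sqc_digraph : clear implicits.
Arguments sqc_sign : clear implicits.
Arguments class_mx : clear implicits.
Arguments arc_mx : clear implicits.

Section SpectrumOfTheFamily.

Variables (N k T : nat).
Hypotheses (kT : (k + 4 <= T)%N) (TN : (T <= N)%N).

Lemma sadj_sqc_digraph (neg : nat -> nat -> bool) :
  sadj (sqc_digraph N k T) (fun u v => neg (seg_class (segment k T u)) (segment k T v)) =
  class_mx N k T *m arc_mx N k T neg.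
Proof.
apply/matrixP => i j; rewrite !mxE !big_ord_recl big_ord0 !mxE /=.
rewrite /sqc_digraph /arc_entry; move: (segment k T j) => s.
by rewrite /seg_class; case: (segment k T i) => [|[|[|a]]] /=;
  rewrite ?mul1r ?mul0r ?addr0 ?add0r.
Qed.

Lemma arc_class_entry (neg : nat -> nat -> bool) (c d : 'I_3) :
  (arc_mx N k T neg *m class_mx N k T) c d =
  let G s := arc_entry neg c s * (seg_class s == d)%:R in
  G 0%N + G 1%N + G 2%N *+ (k + 2) + G 3%N *+ (T - (k + 4)) + G 4%N *+ (N - T).
Proof.
rewrite !mxE; under eq_bigr do rewrite !mxE.
exact: (sum_segment (fun s => arc_entry neg c s * (seg_class s == d)%:R)).
Qed.

Lemma arc_class_unsigned :
  arc_mx N k T (fun _ _ => false) *m class_mx N k T =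
  star_mx 1 ((T - (k + 4) + (N - T))%:R) (k + 2)%:R 1.
Proof.
apply/matrixP => c d; rewrite arc_class_entry mxE /=.
case: c => [[|[|[|c]]] ?] //; case: d => [[|[|[|d]]] ?] //=;
  by rewrite /arc_entry /sign_of /= ?expr0 ?mul1r ?mul0r ?mulr1 ?mulr0 ?mul0rn
             ?addr0 ?add0r ?natrD.
Qed.

Lemma arc_class_signed :
  arc_mx N k T class_neg *m class_mx N k T =
  star_mx 1 ((N - T)%:R - (T - (k + 4))%:R) (k + 2)%:R (-1).
Proof.
apply/matrixP => c d; rewrite arc_class_entry mxE /=.
case: c => [[|[|[|c]]] ?] //; case: d => [[|[|[|d]]] ?] //=;
  rewrite /arc_entry /sign_of /= ?expr0 ?expr1 ?mul1r ?mul0r ?mulr1 ?mulr0 ?mul0rn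
          ?addr0 ?add0r ?natrD //.
by rewrite mulNrn addrC.
Qed.

Lemma spectrum_sqc_digraph :
  let r := sqrtC (N - 2)%:R in
  is_spectrum (adj (sqc_digraph N k T)) [:: r, - r & nseq (N - 2) 0].
Proof.
move=> r; rewrite /is_spectrum /adj (sadj_sqc_digraph (fun _ _ => false)).
rewrite (@char_poly_rank3 _ _ _ _ (r * r)); first last.
- rewrite arc_class_unsigned char_poly_star_mx mul1r mulr1 -natrD -expr2 sqrtCK.
  by have -> : (k + 2 + (T - (k + 4) + (N - T)) = N - 2)%N by lia.
- lia.
rewrite !big_cons prod_XsubC_nseq0 polyCN rmorphM /=; ring.
Qed.

Lemma spectrum_sqc_signed : (T + T = N + 2)%N ->
  is_spectrum (sadj (sqc_digraph N k T) (sqc_sign N k T)) (nseq N 0).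
Proof.
move=> TT; rewrite /is_spectrum (sadj_sqc_digraph class_neg) prod_XsubC_nseq0.
rewrite (@char_poly_rank3 _ _ _ _ 0); first last.
- rewrite arc_class_signed char_poly_star_mx mul1r mulrN1.
  have -> : (N - T = T - (k + 4) + (k + 2))%N by lia.
  by congr ('X^3 - _%:P * 'X); rewrite natrD; ring.
- lia.
by rewrite subr0 -exprD subnK //; lia.
Qed.

End SpectrumOfTheFamily.

Lemma all_real_sqrt_spectrum (m l : nat) :
  all (fun a : algC => a \is Num.real) [:: sqrtC m%:R, - sqrtC m%:R & nseq l 0].
Proof.
have sqrt_real : sqrtC (m%:R : algC) \is Num.real.
  by apply: ger0_real; rewrite sqrtC_ge0 ler0n.
by rewrite /= realN sqrt_real all_real_nseq0.
Qed.

Lemma sqc_digraph_irrefl (N k T : nat) : digraph (sqc_digraph N k T).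
Proof. by move=> v; rewrite /sqc_digraph; case: (segment k T v) => [|[|[|[|[|s]]]]]. Qed.

Section Vertices.

Variables (N k T : nat).
Hypotheses (kT : (k + 4 <= T)%N) (TN : (T < N)%N).

Let lt0N : (0 < N)%N. Proof. lia. Qed.
Let lt1N : (1 < N)%N. Proof. lia. Qed.
Let lt2N : (2 < N)%N. Proof. lia. Qed.
Let ltlastN : (N.-1 < N)%N. Proof. lia. Qed.

Definition vtx0 : 'I_N := Ordinal lt0N.
Definition vtx1 : 'I_N := Ordinal lt1N.
Definition vtx2 : 'I_N := Ordinal lt2N.
Definition vtx_last : 'I_N := Ordinal ltlastN.

Lemma segment_vtx0 : segment k T vtx0 = 0%N. Proof. by []. Qed.
Lemma segment_vtx1 : segment k T vtx1 = 1%N. Proof. by []. Qed.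
Lemma segment_vtx2 : segment k T vtx2 = 2%N.
Proof. by rewrite /segment /=; case: ifP; lia. Qed.
Lemma segment_vtx_last : segment k T vtx_last = 4%N.
Proof. by rewrite /segment /=; repeat case: ifP; lia. Qed.

Local Notation D := (sqc_digraph N k T).

Lemma sqc_digraph_strong : strongly_connected D.
Proof.
have to_last (u : 'I_N) : seg_class (segment k T u) = 0%N -> D u vtx_last.
  by move=> cls_u; rewrite /sqc_digraph segment_vtx_last cls_u.
have last_to1 : D vtx_last vtx1 by rewrite /sqc_digraph segment_vtx_last segment_vtx1.
have via_last (w : 'I_N) : seg_class (segment k T w) = 0%N -> connect D w vtx1.
  by move=> cls_w; apply: connect_trans (connect1 (to_last w cls_w)) (connect1 last_to1).
have to1 (u : 'I_N) : connect D u vtx1.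
  case Eu: (segment k T u) => [|[|[|s]]].
  - apply: connect_trans (connect1 _) (via_last vtx2 _); last by rewrite segment_vtx2.
    by rewrite /sqc_digraph Eu segment_vtx2.
  - by apply: via_last; rewrite Eu.
  - by apply: via_last; rewrite Eu.
  - by apply: connect1; rewrite /sqc_digraph Eu segment_vtx1.
have from1 (v : 'I_N) : connect D vtx1 v.
  have from0 : D vtx1 vtx0 by rewrite /sqc_digraph segment_vtx0 segment_vtx1.
  case Ev: (segment k T v) => [|[|[|s]]].
  - by apply: connect1; rewrite /sqc_digraph Ev segment_vtx1.
  - apply: connect_trans (connect1 (to_last _ _)) (connect1 _); first by rewrite segment_vtx1.
    by rewrite /sqc_digraph Ev segment_vtx_last.
  - by apply: connect_trans (connect1 from0) (connect1 _); rewrite /sqc_digraph Ev segment_vtx0.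
  - by apply: connect1; rewrite /sqc_digraph Ev segment_vtx1.
by move=> u v; apply: connect_trans (to1 u) (from1 v).
Qed.

Lemma sqc_digraph_nonsym : ~ symmetric_digraph D.
Proof.
move=> /(_ vtx2 vtx_last).
by rewrite /sqc_digraph segment_vtx2 segment_vtx_last => /(_ isT).
Qed.

Lemma sqc_sign_unbalanced : ~ cycle_balanced D (sqc_sign N k T).
Proof.
have vtx1_last : vtx1 != vtx_last by apply/eqP => /(congr1 val) /=; lia.
have two_cycle : dcycle D [:: vtx1; vtx_last].
  split => //=; first by rewrite inE andbT.
  by rewrite /sqc_digraph segment_vtx1 segment_vtx_last.
move=> /(_ _ two_cycle); rewrite /cycle_sign !big_cons big_nil /next /= eqxx.
rewrite eq_sym (negbTE vtx1_last) /sqc_sign segment_vtx1 segment_vtx_last /sign_of /=.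
rewrite expr0 expr1 mul1r mulr1 => /eqP; rewrite -subr_eq0 -opprD oppr_eq0.
by rewrite -(natrD _ 1 1) pnatr_eq0.
Qed.

End Vertices.

Definition outdeg (N : nat) (D : rel 'I_N) (u : 'I_N) : nat := \sum_(v < N) D u v.

Lemma outdeg_perm (N : nat) (D1 D2 : rel 'I_N) (f : {perm 'I_N}) :
  (forall u v, D1 u v = D2 (f u) (f v)) -> forall u, outdeg D1 u = outdeg D2 (f u).
Proof.
move=> Df u; rewrite /outdeg [RHS](reindex_inj (@perm_inj _ f)) /=.
by apply: eq_bigr => v _; rewrite Df.
Qed.

Lemma outdeg_sqc_digraph (N k T : nat) (u : 'I_N) : (k + 4 <= T)%N -> (T <= N)%N ->
  outdeg (sqc_digraph N k T) u =
  (if seg_class (segment k T u) == 0 then N - k - 3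
   else if seg_class (segment k T u) == 1 then k + 2 else 1)%N.
Proof.
move=> kT TN; rewrite /outdeg /sqc_digraph.
rewrite (sum_segment (fun s => nat_of_bool (class_arc (seg_class (segment k T u)) s))) //.
by case: (segment k T u) => [|[|[|s]]] /=; rewrite ?mul0rn ?natn; lia.
Qed.

Lemma sqc_digraph_noniso (N k l T : nat) :
  (k + 4 <= T)%N -> (l + 4 <= T)%N -> (T < N)%N -> (k + l + 5 < N)%N -> k != l ->
  ~ isomorphic (sqc_digraph N k T) (sqc_digraph N l T).
Proof.
move=> kT lT TN kl_small kl [f Df].
have := outdeg_perm Df (vtx0 kT TN).
rewrite !outdeg_sqc_digraph ?(ltnW TN) // segment_vtx0 /=.
by case: ifP => _; [lia | case: ifP => _; lia].
Qed.

Local Close Scope ring_scope.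

Theorem theorem2p16 (n : nat) : (4 <= n)%N ->
  exists Ds : 'I_n -> rel 'I_(4 ^ n),
    (forall k, [/\ digraph (Ds k), strongly_connected (Ds k) & ~ symmetric_digraph (Ds k)]) /\
    (forall k l, k != l -> ~ isomorphic (Ds k) (Ds l) /\ real_sqc (Ds k) (Ds l)).
Proof.
move=> n_ge4; set N := 4 ^ n.
have N4x : N = 4 * 4 ^ n.-1 by rewrite -expnS prednK //; lia.
have n_lt_pow : n.-1 < 4 ^ n.-1 by apply: ltn_expl.
pose T := 2 * 4 ^ n.-1 + 1.
have kT (k : 'I_n) : k + 4 <= T by have := ltn_ord k; lia.
have TN : T < N by lia.
have TT : T + T = N + 2 by lia.
exists (fun k : 'I_n => sqc_digraph N k T); split.
  move=> k; split; [exact: sqc_digraph_irrefl | exact: sqc_digraph_strong (kT k) TN |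
    exact: sqc_digraph_nonsym (kT k) TN].
move=> k l kl; split.
  by apply: sqc_digraph_noniso (kT k) (kT l) TN _ kl; have := ltn_ord k; have := ltn_ord l; lia.
split.
  exists [:: sqrtC (N - 2)%:R, (- sqrtC (N - 2)%:R)%R & nseq (N - 2) 0%R].
  split; [exact: spectrum_sqc_digraph (kT k) (ltnW TN) |
    exact: spectrum_sqc_digraph (kT l) (ltnW TN) | exact: all_real_sqrt_spectrum].
exists (sqc_sign N k T), (sqc_sign N l T); split;
  [exact: sqc_sign_unbalanced (kT k) TN | exact: sqc_sign_unbalanced (kT l) TN |].
exists (nseq N 0%R); split; [exact: spectrum_sqc_signed (kT k) (ltnW TN) TT |
  exact: spectrum_sqc_signed (kT l) (ltnW TN) TT | exact: all_real_nseq0].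
Qed.
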